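(* Let $R_1\leftarrow R_{12}\to R_2$ be a correspondence in $\mathrm{DGRings}^{0,-1}$. It is admissible if and only if the correspondence of underlying groupoids $\mathrm{Cone}(R_1)\leftarrow\mathrm{Cone}(R_{12})\to\mathrm{Cone}(R_2)$ in $\mathrm{Cats}'$ is admissible in the categorical sense.
   Context: Rings are commutative and unital. $\mathrm{DGRings}^{0,-1}$ is the category of commutative DG rings $R$ with $R^i=0$ for $i\ne0,-1$. Equivalently, such $R$ is a ring $C=R^0$, a $C$-module $I=R^{-1}$ and a $C$-linear $d:I\to C$ with $d(x)y=d(y)x$. Quasi-isomorphisms are morphisms inducing isomorphisms on $\ker d$ and $\operatorname{coker} d$. A correspondence $R_1\xleftarrow{f}R_{12}\xrightarrow{g}R_2$ in $\mathrm{DGRings}^{0,-1}$ is admissible if $f$ is a quasi-isomorphism and $R_{12}^{-1}\to R_1^{-1}\times R_2^{-1}$ is an isomorphism. $\mathrm{Cone}(R)$ is the groupoid whose set of objects is $C$ and whose morphisms are the pairs $(c,x)\in C\times I$, the pair being a morphism $c\to c+dx$. Composition is $(c+dx,y)\circ(c,x)=(c,x+y)$. A morphism of $\mathrm{DGRings}^{0,-1}$ induces a functor in the obvious way. $\mathrm{Cats}'$ is the naive 1-category of small categories, with functors on the nose. A correspondence $\mathcal{C}_1\leftarrow\mathcal{C}_{12}\to\mathcal{C}_2$ in $\mathrm{Cats}'$ is admissible in the categorical sense if it is isomorphic, as a correspondence (isomorphism of middle terms commuting on the nose with both legs), to $\mathcal{C}_1\leftarrow\mathrm{Graph}_\Phi\to\mathcal{C}_2$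 for some functor $\Phi:\mathcal{C}_1\to\mathcal{C}_2$. Here $\mathrm{Graph}_\Phi$ is the category of triples $(c_1,c_2,\psi:\Phi(c_1)\xrightarrow{\sim}c_2)$ with the projection functors. *)

From HB Require Import structures.
From mathcomp Require Import all_boot all_algebra.
From Stdlib Require Import ProofIrrelevance FunctionalExtensionality.
Set Implicit Arguments. Unset Strict Implicit. Unset Printing Implicit Defensive.
Import GRing.Theory.
Local Open Scope ring_scope.

Record category := Category {
  ob : Type;
  hom : ob -> ob -> Type;
  idm : forall a, hom a a;
  comp : forall a b c, hom b c -> hom a b -> hom a c;
  comp_id_l : forall a b (f : hom a b), comp (idm b) f = f;
  comp_id_r : forall a b (f : hom a b), comp f (idm a) = f;
  comp_assoc : forall a b c d (f : hom a b) (g : hom b c) (h : hom c d),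
      comp h (comp g f) = comp (comp h g) f }.
Arguments hom : clear implicits.
Arguments idm {C} a : rename.
Arguments comp {C a b c} g f : rename.

Record functor (C D : category) := Functor {
  fob : ob C -> ob D;
  fmap : forall a b, hom C a b -> hom D (fob a) (fob b);
  fmap_id : forall a, fmap (idm a) = idm (fob a);
  fmap_comp : forall a b c (f : hom C a b) (g : hom C b c),
      fmap (comp g f) = comp (fmap g) (fmap f) }.
Arguments fmap {C D} F {a b} f : rename.

Definition functor_id (C : category) : functor C C.
Proof.
refine (@Functor C C (fun a => a) (fun a b f => f) _ _); by [].
Defined.

Definition functor_comp (C D E : category) (G : functor D E) (F : functor C D)
  : functor C E.
Proof.
refine (@Functor C E (fun a => fob G (fob F a)) (fun a b f => fmap G (fmap F f)) _ _).
- by move=> a; rewrite fmap_id fmap_id.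
- by move=> a b c f g; rewrite fmap_comp fmap_comp.
Defined.

Definition cat_iso (C D : category) (H : functor C D) : Prop :=
  exists K : functor D C,
    functor_comp K H = functor_id C /\ functor_comp H K = functor_id D.

Definition is_iso (C : category) (a b : ob C) (f : hom C a b) : Prop :=
  exists g : hom C b a, comp g f = idm a /\ comp f g = idm b.

Section Graph.
Variables (C1 C2 : category) (Phi : functor C1 C2).

Record graph_ob := GOb {
  go1 : ob C1; go2 : ob C2;
  gpsi : hom C2 (fob Phi go1) go2;
  gpsi_iso : is_iso gpsi }.

Record graph_hom (x y : graph_ob) := GHom {
  gh1 : hom C1 (go1 x) (go1 y);
  gh2 : hom C2 (go2 x) (go2 y);
  gh_sq : comp gh2 (gpsi x) = comp (gpsi y) (fmap Phi gh1) }.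

Lemma graph_hom_eq (x y : graph_ob) (f g : graph_hom x y) :
  gh1 f = gh1 g -> gh2 f = gh2 g -> f = g.
Proof.
case: f g => f1 f2 fs [g1 g2 gs] /= e1 e2; subst.
by rewrite (proof_irrelevance _ fs gs).
Qed.

Lemma graph_id_sq (x : graph_ob) :
  comp (idm (go2 x)) (gpsi x) = comp (gpsi x) (fmap Phi (idm (go1 x))).
Proof. by rewrite fmap_id comp_id_l comp_id_r. Qed.

Definition graph_idm (x : graph_ob) : graph_hom x x :=
  GHom (graph_id_sq x).

Lemma graph_comp_sq (x y z : graph_ob) (g : graph_hom y z) (f : graph_hom x y) :
  comp (comp (gh2 g) (gh2 f)) (gpsi x)
  = comp (gpsi z) (fmap Phi (comp (gh1 g) (gh1 f))).
Proof.
rewrite -comp_assoc gh_sq comp_assoc gh_sq -comp_assoc fmap_comp.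
by [].
Qed.

Definition graph_comp (x y z : graph_ob) (g : graph_hom y z) (f : graph_hom x y)
  : graph_hom x z := GHom (graph_comp_sq g f).

Definition graph : category.
Proof.
refine (@Category graph_ob graph_hom graph_idm graph_comp _ _ _).
- by move=> a b f; apply: graph_hom_eq; rewrite /= comp_id_l.
- by move=> a b f; apply: graph_hom_eq; rewrite /= comp_id_r.
- by move=> a b c d f g h; apply: graph_hom_eq; rewrite /= comp_assoc.
Defined.

Definition graph_pr1 : functor graph C1.
Proof.
refine (@Functor graph C1 (@go1) (fun a b f => gh1 f) _ _); by [].
Defined.

Definition graph_pr2 : functor graph C2.
Proof.
refine (@Functor graph C2 (@go2) (fun a b f => gh2 f) _ _); by [].
Defined.
End Graph.

Definition cat_admissible (C1 C12 C2 : category)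
  (F : functor C12 C1) (G : functor C12 C2) : Prop :=
  exists (Phi : functor C1 C2) (H : functor C12 (graph Phi)),
    cat_iso H /\ functor_comp (graph_pr1 Phi) H = F
              /\ functor_comp (graph_pr2 Phi) H = G.

(* R^0 = C, R^{-1} = I, d : I -> C C-linear with d(x) y = d(y) x *)
Record dgring := DGRing {
  dgC : comPzRingType;
  dgI : lmodType dgC;
  dgd : dgI -> dgC;
  dgd_lin : forall (c : dgC) (x y : dgI), dgd (c *: x + y) = c * dgd x + dgd y;
  dgd_sym : forall x y : dgI, dgd x *: y = dgd y *: x }.
Arguments dgd : clear implicits.

Record dghom (R S : dgring) := DGHom {
  f0 : {rmorphism dgC R -> dgC S};
  f1 : dgI R -> dgI S;
  f1_lin : forall (c : dgC R) (x y : dgI R), f1 (c *: x + y) = f0 c *: f1 x + f1 y;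
  f_d : forall x : dgI R, dgd S (f1 x) = f0 (dgd R x) }.

Lemma dgd0 (R : dgring) : dgd R 0 = 0.
Proof.
have := dgd_lin (1 : dgC R) 0 0; rewrite scale1r addr0 mul1r.
by move=> /(congr1 (fun z => z - dgd R 0)); rewrite subrr addrK => /esym.
Qed.

Lemma dgdD (R : dgring) (x y : dgI R) : dgd R (x + y) = dgd R x + dgd R y.
Proof. by have := dgd_lin 1 x y; rewrite scale1r mul1r. Qed.

Lemma f1_0 (R S : dgring) (f : dghom R S) : f1 f 0 = 0.
Proof.
have := f1_lin f 1 0 0; rewrite scale1r addr0 rmorph1 scale1r.
by move=> /(congr1 (fun z => z - f1 f 0)); rewrite subrr addrK => /esym.
Qed.

(* the map induced on H^{-1} = ker d *)
Definition ker_map (R S : dgring) (f : dghom R S)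
  (x : {x : dgI R | dgd R x == 0}) : {x : dgI S | dgd S x == 0} :=
  exist (fun y : dgI S => dgd S y == 0) (f1 f (val x))
    (ltac:(by rewrite /= f_d (eqP (valP x)) rmorph0)).

(* quasi-isomorphism: isomorphisms on ker d and on coker d = C / d(I).
   The induced map on coker d is written out: injectivity and surjectivity
   of the map  c mod d(I) |-> f0 c mod d(I'). *)
Definition quasi_iso (R S : dgring) (f : dghom R S) : Prop :=
  bijective (ker_map f)
  /\ (forall c1 c2 : dgC R, (exists x' : dgI S, f0 f c1 = f0 f c2 + dgd S x') ->
        exists x : dgI R, c1 = c2 + dgd R x)
  /\ (forall c' : dgC S, exists (c : dgC R) (x' : dgI S), c' = f0 f c + dgd S x').

Definition dg_admissible (R1 R12 R2 : dgring) (f : dghom R12 R1) (g : dghom R12 R2)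
  : Prop :=
  quasi_iso f /\ bijective (fun x : dgI R12 => (f1 f x, f1 g x)).

Section Cone.
Variable R : dgring.

Definition cone_hom (c c' : dgC R) := {x : dgI R | c' == c + dgd R x}.

Definition cone_idm (c : dgC R) : cone_hom c c :=
  exist (fun x : dgI R => c == c + dgd R x) 0 (ltac:(by rewrite /= dgd0 addr0)).

Lemma cone_comp_proof (a b c : dgC R) (g : cone_hom b c) (f : cone_hom a b) :
  c == a + dgd R (val f + val g).
Proof.
apply/eqP; rewrite dgdD addrA.
have eg : c = b + dgd R (val g) by apply/eqP; exact: (valP g).
have ef : b = a + dgd R (val f) by apply/eqP; exact: (valP f).
transitivity (b + dgd R (val g)); first exact: eg.
congr (_ + _); exact: ef.
Qed.

Definition cone_comp (a b c : dgC R) (g : cone_hom b c) (f : cone_hom a b)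
  : cone_hom a c :=
  exist (fun x : dgI R => c == a + dgd R x) (val f + val g)
    (cone_comp_proof g f).

Definition cone : category.
Proof.
refine (@Category (dgC R) cone_hom cone_idm cone_comp _ _ _).
- by move=> a b f; apply: val_inj; rewrite /= addr0.
- by move=> a b f; apply: val_inj; rewrite /= add0r.
- by move=> a b c d f g h; apply: val_inj; rewrite /= addrA.
Defined.
End Cone.

Lemma cone_fmap_proof (R S : dgring) (f : dghom R S) (a b : dgC R)
  (x : cone_hom a b) : f0 f b == f0 f a + dgd S (f1 f (val x)).
Proof.
apply/eqP; rewrite f_d -rmorphD.
exact: (congr1 (f0 f) (eqP (valP x))).
Qed.

Definition cone_fmap (R S : dgring) (f : dghom R S) (a b : dgC R)
  (x : cone_hom a b) : cone_hom (f0 f a) (f0 f b) :=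
  exist (fun y : dgI S => f0 f b == f0 f a + dgd S y) (f1 f (val x))
    (cone_fmap_proof f x).

Definition cone_functor (R S : dgring) (f : dghom R S) : functor (cone R) (cone S).
Proof.
refine (@Functor (cone R) (cone S) (f0 f) (@cone_fmap R S f) _ _).
- by move=> a; apply: val_inj; rewrite /= f1_0.
- move=> a b c x y; apply: val_inj => /=.
  by have := f1_lin f 1 (val x) (val y); rewrite !scale1r rmorph1 scale1r.
Defined.

From Pilot Require Import Defs.
From HB Require Import structures.
From mathcomp Require Import all_boot ssralg ring.
From Stdlib Require Import ProofIrrelevance FunctionalExtensionality ClassicalEpsilon.
Set Implicit Arguments. Unset Strict Implicit. Unset Printing Implicit Defensive.
Import GRing.Theory.
Local Open Scope ring_scope.

(* Write [dlift a b] for the differential of the element of [R12^{-1}] with components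
   [(a, b)]. If [f] is a quasi-isomorphism, the kernel of [f^0] is [dlift 0 R2^{-1}] and
   [dlift 0] is injective. Fix a section [s] of [f^0]: a morphism [a : c1 -> c1'] of
   [Cone(R1)] determines a unique [b] with [s c1' = s c1 + dlift a b], which is [Phi a],
   while [Phi c1 = g^0 (s c1)]. An object [c] of [Cone(R12)] goes to [(f^0 c, g^0 c, b)]
   where [c = s (f^0 c) + dlift 0 b], and a morphism [x] to [(f^1 x, g^1 x)].

   Conversely, [Graph_Phi -> Cone(R1)] is fully faithful and surjective on objects, every
   object can be moved inside its fibre along any morphism of [Cone(R2)], and a morphism
   with two zero components is an identity. Transported along the isomorphism with
   [Cone(R12)], these say that [f] is a quasi-isomorphism and that [(f^1, g^1)] is
   bijective. *)

Lemma inj_surj_bij (A : choiceType) (B : eqType) (h : A -> B) :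
  injective h -> (forall y, exists x, h x = y) -> bijective h.
Proof.
move=> h_inj h_surj.
have hP y : exists x, h x == y by have [x <-] := h_surj y; exists x.
exists (fun y => xchoose (hP y)) => [x|y]; last exact/eqP/(xchooseP (hP y)).
by apply: h_inj; exact/eqP/(xchooseP (hP _)).
Qed.

Definition hcast (C : category) (a b a' b' : ob C) (ea : a = a') (eb : b = b')
    (h : hom C a b) : hom C a' b' :=
  match ea in _ = a' return hom C a' b' with
  | erefl => match eb in _ = b' return hom C a b' with erefl => h end end.

Lemma hcast_proj (C : category) (T : Type) (P : forall a b, hom C a b -> T)
    (a b a' b' : ob C) (ea : a = a') (eb : b = b') (h : hom C a b) :
  P _ _ (hcast ea eb h) = P _ _ h.
Proof. by case: a' / ea; case: b' / eb. Qed.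

Lemma functor_ext (C D : category) (F G : functor C D)
    (e : forall a, fob F a = fob G a) :
  (forall a b (h : hom C a b), hcast (e a) (e b) (fmap F h) = fmap G h) -> F = G.
Proof.
case: F G e => [fo fm fi fc] [go gm gi gc] /= e eh.
have efo : fo = go := functional_extensionality _ _ e; subst go.
have ee : e = (fun a => erefl) by apply: proof_irrelevance.
subst e; have efm : fm = gm.
  by do 3!apply: functional_extensionality_dep => ?; exact: eh.
by subst gm; congr Functor; apply: proof_irrelevance.
Qed.

Lemma fmap_congr (C D : category) (T : Type) (P : forall a b, hom D a b -> T)
    (F G : functor C D) :
  F = G -> forall a b (h : hom C a b), P _ _ (fmap F h) = P _ _ (fmap G h).
Proof. by move=> ->. Qed.

Section GraphProjection.
Variables (C1 C2 : category) (Phi : functor C1 C2).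

Lemma graph_pr1_faithful (o o' : graph_ob Phi) (m m' : graph_hom o o') :
  gh1 m = gh1 m' -> m = m'.
Proof.
move=> e1; apply: graph_hom_eq => //.
have [k [_ psik]] := gpsi_iso o.
by rewrite -[gh2 m]comp_id_r -[gh2 m']comp_id_r -psik !comp_assoc !gh_sq e1.
Qed.

Lemma graph_pr1_full (o o' : graph_ob Phi) (m1 : hom C1 (go1 o) (go1 o')) :
  exists m : graph_hom o o', gh1 m = m1.
Proof.
have [k [kpsi _]] := gpsi_iso o.
have sq : Defs.comp (Defs.comp (Defs.comp (gpsi o') (fmap Phi m1)) k) (gpsi o)
          = Defs.comp (gpsi o') (fmap Phi m1).
  by rewrite -comp_assoc kpsi comp_id_r.
by exists (GHom sq).
Qed.

End GraphProjection.

Lemma dgdB (R : dgring) : {morph dgd R : x y / x - y}.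
Proof. by move=> x y; rewrite addrC -scaleN1r dgd_lin mulN1r addrC. Qed.

HB.instance Definition _ (R : dgring) :=
  GRing.isZmodMorphism.Build _ _ (dgd R) (@dgdB R).

Lemma f1B (R S : dgring) (f : dghom R S) : {morph f1 f : x y / x - y}.
Proof. by move=> x y; rewrite addrC -scaleN1r f1_lin rmorphN1 scaleN1r addrC. Qed.

HB.instance Definition _ (R S : dgring) (f : dghom R S) :=
  GRing.isZmodMorphism.Build _ _ (f1 f) (@f1B R S f).

Section ConeMorphisms.
Variable R : dgring.

Lemma cone_hom_eq (a b : dgC R) (h h' : hom (cone R) a b) : val h = val h' -> h = h'.
Proof. exact: val_inj. Qed.

Lemma cone_hom_tgt (a b : dgC R) (h : cone_hom a b) : b = a + dgd R (val h).
Proof. exact/eqP/(valP h). Qed.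

Definition cone_mk (a b : dgC R) (x : dgI R) (e : b = a + dgd R x) : cone_hom a b :=
  exist _ x (introT eqP e).

Lemma cone_is_iso (a b : dgC R) (h : hom (cone R) a b) : is_iso h.
Proof.
have e : a = b + dgd R (- val h).
  by move: (val h) (cone_hom_tgt h) => x ->; rewrite raddfN addrK.
by exists (cone_mk e); split; apply: cone_hom_eq; rewrite /= ?subrr ?addNr.
Qed.

Lemma cone_functor_ext (C : category) (F G : functor C (cone R))
    (e : forall a, fob F a = fob G a) :
  (forall a b (h : hom C a b), val (fmap F h) = val (fmap G h)) -> F = G.
Proof.
move=> eh; apply: (functor_ext (e := e)) => a b h; apply: cone_hom_eq; rewrite -eh.
exact: (hcast_proj (fun a b (m : hom (cone R) a b) => val m) (e a) (e b)).
Qed.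
End ConeMorphisms.

Section GraphOverCones.
Variables (R1 R2 : dgring) (Phi : functor (cone R1) (cone R2)).

Lemma graph_square_val (o o' : graph_ob Phi) (m : graph_hom o o') :
  val (gpsi o) + val (gh2 m) = val (fmap Phi (gh1 m)) + val (gpsi o').
Proof. exact: (congr1 val (gh_sq m)). Qed.

Lemma cone_fmap_val0 (a b : dgC R1) (h : hom (cone R1) a b) :
  val h = 0 -> val (fmap Phi h) = 0.
Proof.
move=> h0; have eb := cone_hom_tgt h; rewrite h0 raddf0 addr0 in eb; subst b.
by rewrite (_ : h = idm (C := cone R1) a) ?fmap_id //; apply: cone_hom_eq.
Qed.

Lemma graph_ob_eq (o o' : graph_ob Phi) :
  go1 o = go1 o' -> go2 o = go2 o' -> val (gpsi o) = val (gpsi o') -> o = o'.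
Proof.
case: o o' => a b p pi [a' b' p' pi'] /= e1 e2; subst a' b' => /val_inj ep.
by subst p'; congr GOb; apply: proof_irrelevance.
Qed.

Lemma graph_hom_val0_eq (o o' : graph_ob Phi) (m : graph_hom o o') :
  val (gh1 m) = 0 -> val (gh2 m) = 0 -> o = o'.
Proof.
move=> m1 m2; apply: graph_ob_eq.
- by rewrite (cone_hom_tgt (gh1 m)) m1 raddf0 addr0.
- by rewrite (cone_hom_tgt (gh2 m)) m2 raddf0 addr0.
- by have := graph_square_val m; rewrite m2 cone_fmap_val0 // addr0 add0r.
Qed.

Lemma graph_functor_ext (C : category) (F G : functor C (graph Phi))
    (e : forall a, fob F a = fob G a) :
  (forall a b (h : hom C a b), val (gh1 (fmap F h)) = val (gh1 (fmap G h))) -> F = G.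
Proof.
move=> eh; apply: (functor_ext (e := e)) => a b h.
apply: graph_pr1_faithful; apply: cone_hom_eq; rewrite -eh.
exact: (hcast_proj (fun a b (m : hom (graph Phi) a b) => val (gh1 m)) (e a) (e b)).
Qed.

End GraphOverCones.

Section AdmissibleOfGraphIso.
Variables (R1 R12 R2 : dgring) (f : dghom R12 R1) (g : dghom R12 R2).
Variables (Phi : functor (cone R1) (cone R2)) (H : functor (cone R12) (graph Phi))
  (K : functor (graph Phi) (cone R12)).
Hypotheses (KH : functor_comp K H = functor_id _) (HK : functor_comp H K = functor_id _)
  (Hf : functor_comp (graph_pr1 Phi) H = cone_functor f)
  (Hg : functor_comp (graph_pr2 Phi) H = cone_functor g).

Lemma KH_ob c : fob K (fob H c) = c.
Proof. exact (congr1 (fun F => fob F c) KH). Qed.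

Lemma HK_ob o : fob H (fob K o) = o.
Proof. exact (congr1 (fun F => fob F o) HK). Qed.

Lemma H_go1 c : go1 (fob H c) = f0 f c.
Proof. exact (congr1 (fun F => fob F c) Hf). Qed.

Lemma KH_val (a b : dgC R12) (x : hom (cone R12) a b) :
  val (fmap K (fmap H x)) = val x.
Proof. exact: (fmap_congr (fun a b (m : hom (cone R12) a b) => val m) KH x). Qed.

Lemma HK_val1 (o o' : graph_ob Phi) (m : hom (graph Phi) o o') :
  val (gh1 (fmap H (fmap K m))) = val (gh1 m).
Proof.
exact: (fmap_congr (fun a b (m : hom (graph Phi) a b) => val (gh1 m)) HK m).
Qed.

Lemma HK_val2 (o o' : graph_ob Phi) (m : hom (graph Phi) o o') :
  val (gh2 (fmap H (fmap K m))) = val (gh2 m).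
Proof.
exact: (fmap_congr (fun a b (m : hom (graph Phi) a b) => val (gh2 m)) HK m).
Qed.

Lemma H_val1 (a b : dgC R12) (x : hom (cone R12) a b) :
  val (gh1 (fmap H x)) = f1 f (val x).
Proof. exact: (fmap_congr (fun a b (m : hom (cone R1) a b) => val m) Hf x). Qed.

Lemma H_val2 (a b : dgC R12) (x : hom (cone R12) a b) :
  val (gh2 (fmap H x)) = f1 g (val x).
Proof. exact: (fmap_congr (fun a b (m : hom (cone R2) a b) => val m) Hg x). Qed.

Lemma iso_graph_hom_lift (c : dgC R12) (o : graph_ob Phi) (m : graph_hom (fob H c) o) :
  exists x, fob K o = c + dgd R12 x /\ f1 f x = val (gh1 m) /\ f1 g x = val (gh2 m).
Proof.
pose x := val (fmap K m).
have ex : fob K o = c + dgd R12 x.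
  by rewrite -[c in c + _](KH_ob c); exact: cone_hom_tgt.
by exists x; rewrite -H_val1 -H_val2 HK_val1 HK_val2.
Qed.

Lemma iso_f0_surj c1 : exists c, f0 f c = c1.
Proof.
pose o := @GOb _ _ Phi c1 _ (idm (fob Phi c1)) (cone_is_iso _).
by exists (fob K o); rewrite -H_go1 HK_ob.
Qed.

Lemma iso_full c c' a :
  f0 f c' = f0 f c + dgd R1 a -> exists x, c' = c + dgd R12 x /\ f1 f x = a.
Proof.
rewrite -!H_go1 => e.
have [m m1] := graph_pr1_full (cone_mk e : hom (cone R1) _ _).
have [x [ex [fx _]]] := iso_graph_hom_lift m.
by exists x; rewrite -ex KH_ob fx m1.
Qed.

Lemma iso_faithful c c' x x' :
  c' = c + dgd R12 x -> c' = c + dgd R12 x' -> f1 f x = f1 f x' -> x = x'.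
Proof.
move=> ex ex' fx.
have eH : fmap H (cone_mk ex : hom (cone R12) _ _) = fmap H (cone_mk ex').
  by apply: graph_pr1_faithful; apply: cone_hom_eq; rewrite !H_val1.
by have := KH_val (cone_mk ex); rewrite eH KH_val.
Qed.

Lemma iso_fibre_lift (y : dgI R2) : exists x, f1 f x = 0 /\ f1 g x = y.
Proof.
pose o := fob H 0.
pose k : hom (cone R2) (go2 o) (go2 o + dgd R2 y) := cone_mk (erefl _).
pose o' := @GOb _ _ Phi (go1 o) _ (Defs.comp k (gpsi o)) (cone_is_iso _).
have sq : Defs.comp k (gpsi o) = Defs.comp (gpsi o') (fmap Phi (idm (go1 o))).
  by rewrite fmap_id comp_id_r.
have [x [_ [fx gx]]] := iso_graph_hom_lift (@GHom _ _ Phi o o' (idm _) k sq).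
by exists x.
Qed.

Lemma iso_reflect_d x : f1 f x = 0 -> f1 g x = 0 -> dgd R12 x = 0.
Proof.
move=> fx gx.
have eH : fob H 0 = fob H (0 + dgd R12 x).
  by apply: (@graph_hom_val0_eq _ _ _ _ _ (fmap H (cone_mk (erefl (0 + dgd R12 x)))));
    rewrite ?H_val1 ?H_val2.
by have := congr1 (fob K) eH; rewrite !KH_ob add0r.
Qed.

Lemma iso_quasi_iso : quasi_iso f.
Proof.
split; [|split].
- apply: inj_surj_bij.
  + move=> [x px] [x' px'] /(congr1 val) /= fx; apply: val_inj => /=.
    by apply: (iso_faithful (c := 0) (c' := 0)) fx; rewrite ?(eqP px) ?(eqP px') addr0.
  + move=> [y py].
    have [|x [ex fx]] := iso_full (c := 0) (c' := 0) (a := y).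
      by rewrite rmorph0 (eqP py) addr0.
    have px : dgd R12 x == 0 by rewrite -[dgd R12 x]add0r -ex.
    by exists (exist _ x px); apply: val_inj.
- by move=> c1 c2 [x' /iso_full [x [ex _]]]; exists x.
- by move=> c'; have [c ec] := iso_f0_surj c'; exists c, 0; rewrite raddf0 addr0.
Qed.

Lemma iso_pair_bij : bijective (fun x : dgI R12 => (f1 f x, f1 g x)).
Proof.
apply: inj_surj_bij.
- move=> x x' [ef eg]; apply/eqP; rewrite -subr_eq0; apply/eqP.
  have fz : f1 f (x - x') = 0 by rewrite raddfB /= ef subrr.
  have gz : f1 g (x - x') = 0 by rewrite raddfB /= eg subrr.
  apply: (iso_faithful (c := 0) (c' := 0)); last by rewrite fz raddf0.
  + by rewrite iso_reflect_d // addr0.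
  + by rewrite !raddf0 addr0.
- move=> [y1 y2].
  have [c ec] := iso_f0_surj (dgd R1 y1).
  have [|x1 [_ fx1]] := iso_full (c := 0) (c' := c) (a := y1).
    by rewrite ec rmorph0 add0r.
  have [x2 [fx2 gx2]] := iso_fibre_lift (y2 - f1 g x1).
  by exists (x1 + x2); rewrite !raddfD /= fx1 fx2 gx2 addr0 addrC subrK.
Qed.

Lemma dg_admissible_of_graph_iso : dg_admissible f g.
Proof. by split; [exact: iso_quasi_iso | exact: iso_pair_bij]. Qed.

End AdmissibleOfGraphIso.

Section GraphIsoOfAdmissible.
Variables (R1 R12 R2 : dgring) (f : dghom R12 R1) (g : dghom R12 R2).
Hypotheses (f_qiso : quasi_iso f)
  (fg_bij : bijective (fun x : dgI R12 => (f1 f x, f1 g x))).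

Lemma qiso_ker_inj x : dgd R12 x = 0 -> f1 f x = 0 -> x = 0.
Proof.
move=> /eqP dx fx; have [/bij_inj kinj _] := f_qiso.
have d0 : dgd R12 0 == 0 by rewrite raddf0.
have e : exist _ x dx = exist _ 0 d0 :> {x | dgd R12 x == 0}.
  by apply: kinj; apply: val_inj; rewrite /= fx raddf0.
exact: (congr1 val e).
Qed.

Lemma qiso_ker_surj y : dgd R1 y = 0 -> exists x, dgd R12 x = 0 /\ f1 f x = y.
Proof.
move=> /eqP dy; have [[kinv _ kK] _] := f_qiso.
pose z := kinv (exist _ y dy).
by exists (val z); split; [exact/eqP/(valP z) | exact: (congr1 val (kK _))].
Qed.

Definition pair_inv (a : dgI R1) (b : dgI R2) : dgI R12 :=
  epsilon (inhabits 0) (fun x => f1 f x = a /\ f1 g x = b).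

Lemma pair_invP a b : f1 f (pair_inv a b) = a /\ f1 g (pair_inv a b) = b.
Proof.
apply: (epsilon_spec (inhabits 0) (fun x => f1 f x = a /\ f1 g x = b)).
have [h _ hK] := fg_bij.
by exists (h (a, b)); case: (hK (a, b)).
Qed.

Lemma f1_pair_inv a b : f1 f (pair_inv a b) = a.
Proof. by case: (pair_invP a b). Qed.

Lemma g1_pair_inv a b : f1 g (pair_inv a b) = b.
Proof. by case: (pair_invP a b). Qed.

Lemma pair_invK x : pair_inv (f1 f x) (f1 g x) = x.
Proof. by apply: (bij_inj fg_bij); rewrite /= f1_pair_inv g1_pair_inv. Qed.

Lemma pair_invD a b a' b' : pair_inv (a + a') (b + b') = pair_inv a b + pair_inv a' b'.
Proof. by rewrite -[RHS]pair_invK !raddfD /= !f1_pair_inv !g1_pair_inv. Qed.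

Lemma pair_inv00 : pair_inv 0 0 = 0.
Proof. by rewrite -(raddf0 (f1 f)) -(raddf0 (f1 g)) pair_invK. Qed.

Definition dlift (a : dgI R1) (b : dgI R2) : dgC R12 := dgd R12 (pair_inv a b).

Lemma f0_dlift a b : f0 f (dlift a b) = dgd R1 a.
Proof. by rewrite -f_d f1_pair_inv. Qed.

Lemma g0_dlift a b : f0 g (dlift a b) = dgd R2 b.
Proof. by rewrite -f_d g1_pair_inv. Qed.

Lemma dliftD a b a' b' : dlift (a + a') (b + b') = dlift a b + dlift a' b'.
Proof. by rewrite /dlift pair_invD raddfD. Qed.

Lemma dlift_split a b : dlift a b = dlift a 0 + dlift 0 b.
Proof. by rewrite -dliftD addr0 add0r. Qed.

Lemma dliftD0 a a' : dlift (a + a') 0 = dlift a 0 + dlift a' 0.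
Proof. by rewrite -dliftD addr0. Qed.

Lemma dlift0D b b' : dlift 0 (b + b') = dlift 0 b + dlift 0 b'.
Proof. by rewrite -dliftD addr0. Qed.

Lemma dlift00 : dlift 0 0 = 0.
Proof. by rewrite /dlift pair_inv00 raddf0. Qed.

Lemma dlift_pair x : dlift (f1 f x) (f1 g x) = dgd R12 x.
Proof. by rewrite /dlift pair_invK. Qed.

Lemma dlift0_inj : injective (dlift 0).
Proof.
move=> y y' e.
have w0 : pair_inv 0 y - pair_inv 0 y' = 0.
  apply: qiso_ker_inj; rewrite raddfB /=; last by rewrite !f1_pair_inv subrr.
  by rewrite -/(dlift 0 y) -/(dlift 0 y') e subrr.
have := congr1 (f1 g) w0; rewrite raddfB raddf0 /= !g1_pair_inv.
by move/eqP; rewrite subr_eq0 => /eqP.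
Qed.

Lemma ker_f0_dlift z : f0 f z = 0 -> exists y, z = dlift 0 y.
Proof.
move=> fz; have [_ [coker_inj _]] := f_qiso.
have [|x ex] := coker_inj z 0; first by exists 0; rewrite fz rmorph0 raddf0 addr0.
rewrite add0r in ex.
have [|w [dw fw]] := qiso_ker_surj (y := f1 f x); first by rewrite f_d -ex.
exists (f1 g (x - w)).
have -> : z = dgd R12 (x - w) by rewrite raddfB /= dw subr0.
by rewrite -dlift_pair raddfB /= fw subrr.
Qed.

Lemma qiso_f0_surj c1 : exists c, f0 f c = c1.
Proof.
have [_ [_ coker_surj]] := f_qiso; have [c [a ->]] := coker_surj c1.
by exists (c + dlift a 0); rewrite rmorphD f0_dlift.
Qed.

Definition f0_sect (c1 : dgC R1) : dgC R12 :=
  epsilon (inhabits 0) (fun c => f0 f c = c1).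

Lemma f0_sectK c1 : f0 f (f0_sect c1) = c1.
Proof. exact: (epsilon_spec (inhabits 0) _ (qiso_f0_surj c1)). Qed.

Definition fibre_hom (c c' : dgC R12) : dgI R2 :=
  epsilon (inhabits 0) (fun y => c' = c + dlift 0 y).

Lemma fibre_homP c c' : f0 f c = f0 f c' -> c' = c + dlift 0 (fibre_hom c c').
Proof.
move=> e; apply: (epsilon_spec (inhabits 0) (fun y => c' = c + dlift 0 y)).
have [|y ey] := ker_f0_dlift (z := c' - c); first by rewrite rmorphB e subrr.
by exists y; rewrite -ey addrC subrK.
Qed.

Lemma fibre_hom_eq c c' y : c' = c + dlift 0 y -> fibre_hom c c' = y.
Proof.
move=> e; apply: dlift0_inj; apply: (addrI c); rewrite -e; apply/esym/fibre_homP.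
by rewrite e rmorphD f0_dlift raddf0 addr0.
Qed.

Lemma dlift_fibre_hom c c' : f0 f c = f0 f c' -> dlift 0 (fibre_hom c c') = c' - c.
Proof. by move=> /fibre_homP {2}->; rewrite addrC addKr. Qed.

Definition adm_Phi_map (c1 c1' : dgC R1) (h : cone_hom c1 c1') : dgI R2 :=
  fibre_hom (f0_sect c1 + dlift (val h) 0) (f0_sect c1').

Lemma adm_Phi_mapP c1 c1' (h : cone_hom c1 c1') :
  f0_sect c1' = f0_sect c1 + dlift (val h) 0 + dlift 0 (adm_Phi_map h).
Proof.
by apply: fibre_homP; rewrite rmorphD !f0_sectK f0_dlift; exact/esym/cone_hom_tgt.
Qed.

Lemma adm_Phi_tgt c1 c1' (h : cone_hom c1 c1') :
  f0 g (f0_sect c1') = f0 g (f0_sect c1) + dgd R2 (adm_Phi_map h).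
Proof. by rewrite {1}(adm_Phi_mapP h) !rmorphD !g0_dlift raddf0 addr0. Qed.

Definition adm_Phi : functor (cone R1) (cone R2).
Proof.
refine (@Functor (cone R1) (cone R2) (fun c1 => f0 g (f0_sect c1))
  (fun c1 c1' h => cone_mk (adm_Phi_tgt h)) _ _).
- by move=> c1; apply: cone_hom_eq; apply: fibre_hom_eq; rewrite /= dlift00 !addr0.
- move=> a b c h k; apply: cone_hom_eq; apply: fibre_hom_eq => /=.
  by rewrite (adm_Phi_mapP k) (adm_Phi_mapP h) dliftD0 dlift0D; ring.
Defined.

Lemma adm_psi_tgt c :
  f0 g c = f0 g (f0_sect (f0 f c)) + dgd R2 (fibre_hom (f0_sect (f0 f c)) c).
Proof. by rewrite {1}(fibre_homP (f0_sectK (f0 f c))) rmorphD g0_dlift. Qed.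

Definition adm_Hob (c : dgC R12) : graph_ob adm_Phi :=
  @GOb _ _ adm_Phi (f0 f c) (f0 g c) (cone_mk (adm_psi_tgt c)) (cone_is_iso _).

Lemma fibre_hom_square c c' x : c' = c + dgd R12 x ->
  fibre_hom (f0_sect (f0 f c)) c + f1 g x
  = fibre_hom (f0_sect (f0 f c) + dlift (f1 f x) 0) (f0_sect (f0 f c'))
    + fibre_hom (f0_sect (f0 f c')) c'.
Proof.
move=> ->.
have e : f0 f (f0_sect (f0 f c) + dlift (f1 f x) 0)
         = f0 f (f0_sect (f0 f (c + dgd R12 x))).
  by rewrite [LHS]rmorphD !f0_sectK f0_dlift f_d rmorphD.
apply: dlift0_inj; rewrite !dlift0D (dlift_fibre_hom e) !dlift_fibre_hom ?f0_sectK //.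
by rewrite -dlift_pair (dlift_split (f1 f x)); ring.
Qed.

Lemma adm_H_square c c' (x : cone_hom c c') :
  Defs.comp (C := cone R2) (cone_fmap g x) (gpsi (adm_Hob c))
  = Defs.comp (gpsi (adm_Hob c')) (fmap adm_Phi (cone_fmap f x)).
Proof.
apply: cone_hom_eq; rewrite /= /adm_Phi_map /=.
by apply: fibre_hom_square; exact: cone_hom_tgt.
Qed.

Definition adm_H : functor (cone R12) (graph adm_Phi).
Proof.
refine (@Functor (cone R12) (graph adm_Phi) adm_Hob
  (fun c c' x => @GHom _ _ adm_Phi (adm_Hob c) (adm_Hob c')
                   (cone_fmap f x) (cone_fmap g x) (adm_H_square x)) _ _).
- by move=> c; apply: graph_pr1_faithful; apply: cone_hom_eq; rewrite /= raddf0.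
- by move=> a b c x y; apply: graph_pr1_faithful; apply: cone_hom_eq; rewrite /= raddfD.
Defined.

Definition adm_Kob (o : graph_ob adm_Phi) : dgC R12 :=
  f0_sect (go1 o) + dlift 0 (val (gpsi o)).

Lemma adm_K_tgt (o o' : graph_ob adm_Phi) (m : graph_hom o o') :
  adm_Kob o' = adm_Kob o + dlift (val (gh1 m)) (val (gh2 m)).
Proof.
have sq : val (gpsi o) + val (gh2 m) = adm_Phi_map (gh1 m) + val (gpsi o').
  exact: graph_square_val.
by rewrite /adm_Kob (adm_Phi_mapP (gh1 m)) -!addrA -!dliftD !add0r !addr0 sq.
Qed.

Definition adm_K : functor (graph adm_Phi) (cone R12).
Proof.
refine (@Functor (graph adm_Phi) (cone R12) adm_Kob
  (fun o o' m => cone_mk (adm_K_tgt m)) _ _).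
- by move=> o; apply: cone_hom_eq; rewrite /= pair_inv00.
- by move=> o o' o'' m m'; apply: cone_hom_eq; rewrite /= pair_invD.
Defined.

Lemma adm_KH : functor_comp adm_K adm_H = functor_id _.
Proof.
have eo c : fob (functor_comp adm_K adm_H) c = fob (functor_id _) c.
  exact: esym (fibre_homP (f0_sectK (f0 f c))).
apply: (cone_functor_ext eo).
by move=> a b x /=; rewrite pair_invK.
Qed.

Lemma adm_HK : functor_comp adm_H adm_K = functor_id _.
Proof.
have go1K o : f0 f (adm_Kob o) = go1 o by rewrite rmorphD f0_sectK f0_dlift raddf0 addr0.
have eo o : fob (functor_comp adm_H adm_K) o = fob (functor_id _) o.
  apply: graph_ob_eq => /=; first exact: go1K.
    by rewrite rmorphD g0_dlift; exact/esym/cone_hom_tgt.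
  by apply: fibre_hom_eq; rewrite go1K.
by apply: (graph_functor_ext eo) => o o' m /=; rewrite f1_pair_inv.
Qed.

Lemma adm_H_pr1 : functor_comp (graph_pr1 adm_Phi) adm_H = cone_functor f.
Proof.
have eo c : fob (functor_comp (graph_pr1 adm_Phi) adm_H) c = fob (cone_functor f) c by [].
exact: (cone_functor_ext eo).
Qed.

Lemma adm_H_pr2 : functor_comp (graph_pr2 adm_Phi) adm_H = cone_functor g.
Proof.
have eo c : fob (functor_comp (graph_pr2 adm_Phi) adm_H) c = fob (cone_functor g) c by [].
exact: (cone_functor_ext eo).
Qed.

Lemma cat_admissible_of_dg_admissible : cat_admissible (cone_functor f) (cone_functor g).
Proof.
exists adm_Phi, adm_H; split; first by exists adm_K; split; [exact: adm_KH | exact: adm_HK].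
by split; [exact: adm_H_pr1 | exact: adm_H_pr2].
Qed.

End GraphIsoOfAdmissible.

Theorem lemma4p7p1 (R1 R12 R2 : dgring) (f : dghom R12 R1) (g : dghom R12 R2) :
  dg_admissible f g <-> cat_admissible (cone_functor f) (cone_functor g).
Proof.
split=> [[f_qiso fg_bij] | [Phi [H [[K [KH HK]] [Hf Hg]]]]].
- exact: cat_admissible_of_dg_admissible.
- exact: dg_admissible_of_graph_iso KH HK Hf Hg.
Qed.
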